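(* Let $K$ be a field, $b\ge2$ an integer, and let $M=(m_{i,j})_{i,j\ge0}$ be an infinite matrix over $K$ that is $b$-autosimilar and non-degenerate. Then there is a factorization $M=LDU$ where $L$, $D$, $U$ are $b$-autosimilar infinite matrices, $L$ is unipotent lower-triangular, $D$ is diagonal, and $U$ is unipotent upper-triangular.
   Context: An infinite matrix $M=(m_{i,j})_{i,j\ge0}$ is $b$-autosimilar if $m_{0,0}=1$ and $m_{s,t}=\prod_i m_{\sigma_i,\tau_i}$ whenever $s=\sum_i\sigma_ib^i$, $t=\sum_i\tau_ib^i$ are base-$b$ expansions with $\sigma_i,\tau_i\in\{0,\dots,b-1\}$. $M(n)$ denotes the submatrix $(m_{i,j})_{0\le i,j<n}$. A $b$-autosimilar $M$ is non-degenerate if $\det(M(n))$ is invertible (nonzero) for $n=2,\dots,b$. The product $LDU$ of infinite triangular/diagonal matrices is defined entrywise by finite sums. *)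

From HB Require Import structures.
From mathcomp Require Import all_boot all_order all_algebra.
Set Implicit Arguments. Unset Strict Implicit. Unset Printing Implicit Defensive.
Import GRing.Theory.
Local Open Scope ring_scope.

Definition infmx (K : Type) := nat -> nat -> K.

Definition digit (b s i : nat) : nat := ((s %/ b ^ i) %% b)%N.

(* b-autosimilarity: m 0 0 = 1 and m s t = prod_i m (sigma_i) (tau_i).
   The infinite product is written as the finite product over any range
   of digit positions covering all nonzero digits of s and t (the
   remaining factors are m 0 0 = 1). *)
Definition autosimilar (K : fieldType) (b : nat) (M : infmx K) : Prop :=
  M 0%N 0%N = 1 /\
  forall (s t N : nat), (s < b ^ N)%N -> (t < b ^ N)%N ->
    M s t = \prod_(i < N) M (digit b s i) (digit b t i).

Definition submx_n (K : Type) (M : infmx K) (n : nat) : 'M[K]_n :=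
  \matrix_(i < n, j < n) M i j.

Definition autosim_nondegenerate (K : fieldType) (b : nat) (M : infmx K) : Prop :=
  forall n : nat, (2 <= n <= b)%N -> \det (submx_n M n) != 0.

Definition unipotent_lower (K : fieldType) (L : infmx K) : Prop :=
  (forall s, L s s = 1) /\ (forall s t, (s < t)%N -> L s t = 0).

Definition unipotent_upper (K : fieldType) (U : infmx K) : Prop :=
  (forall s, U s s = 1) /\ (forall s t, (t < s)%N -> U s t = 0).

Definition infmx_diagonal (K : fieldType) (D : infmx K) : Prop :=
  forall s t, s <> t -> D s t = 0.

(* Entry (s,t) of L D U, for L lower-triangular and U upper-triangular:
   a finite sum, since L s k = 0 for k > s and U l t = 0 for l > t. *)
Definition LDU_entry (K : fieldType) (L D U : infmx K) (s t : nat) : K :=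
  \sum_(k < s.+1) \sum_(l < t.+1) L s k * D k l * U l t.

From HB Require Import structures.
From mathcomp Require Import all_boot all_order all_algebra.
Set Implicit Arguments. Unset Strict Implicit. Unset Printing Implicit Defensive.
Import GRing.Theory.
Local Open Scope ring_scope.

(* Autosimilarity says that M(b^N) is, after writing indices in base b, the
   N-th Kronecker power of the block M(b).  Non-degeneracy lets Gaussian
   elimination (iterated Schur complements) factor M(b) = l d u with l, u
   unipotent triangular and d diagonal.  Extending l, d, u autosimilarly gives
   L, D, U.  They remain triangular because s < t forces a digit position where
   the digit of s is smaller than that of t, and L D U = M because the sum over
   k < b^N factors digitwise into the product over i of
   (l d u)(s_i, t_i) = m(s_i, t_i). *)

Lemma ltn_exp_of_ltn b s N : (1 < b)%N -> (s < N)%N -> (s < b ^ N)%N.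
Proof. by move=> b_gt1 /leq_trans; apply; apply/ltnW/ltn_expl. Qed.

Lemma sum_ord_widen0 (R : nmodType) n n' (F : nat -> R) : (n <= n')%N ->
  (forall k, (n <= k < n')%N -> F k = 0) -> \sum_(k < n) F k = \sum_(k < n') F k.
Proof.
move=> le_nn' F0; rewrite (big_ord_widen n' F) // big_mkcond.
by apply: eq_bigr => k _; case: ltnP => // le_nk; rewrite F0 // le_nk ltn_ord.
Qed.

Section Digits.

Variable b : nat.
Hypothesis b_gt0 : (0 < b)%N.

Lemma digit0 s : digit b s 0 = (s %% b)%N.
Proof. by rewrite /digit expn0 divn1. Qed.

Lemma digitS s i : digit b s i.+1 = digit b (s %/ b) i.
Proof. by rewrite /digit expnS divnMA. Qed.

Lemma digit_ltb s i : (digit b s i < b)%N.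
Proof. by rewrite ltn_mod. Qed.

Lemma digit_eq0 s i : (s < b ^ i)%N -> digit b s i = 0%N.
Proof. by move=> s_lt; rewrite /digit divn_small // mod0n. Qed.

Lemma digit_ltn_exists s t N : (s < t)%N -> (t < b ^ N)%N ->
  exists2 i, (i < N)%N & (digit b s i < digit b t i)%N.
Proof.
elim: N s t => [|N IH] s t lt_st.
  by rewrite expn0 ltnS leqn0 => /eqP t0; rewrite t0 in lt_st.
rewrite expnSr -ltn_divLR // => t_lt.
case: (ltngtP (s %/ b) (t %/ b)) => [lt_q|lt_q|eq_q].
- by have [i i_lt ?] := IH _ _ lt_q t_lt; exists i.+1; rewrite ?digitS.
- by move: (leq_div2r b (ltnW lt_st)); rewrite leqNgt lt_q.
- exists 0%N => //; rewrite !digit0.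
  by move: lt_st; rewrite {1}(divn_eq s b) {1}(divn_eq t b) eq_q ltn_add2l.
Qed.

Lemma sum_prod_digits (R : pzSemiRingType) N (F : nat -> nat -> R) :
  \sum_(k < b ^ N) \prod_(i < N) F i (digit b k i) = \prod_(i < N) \sum_(c < b) F i c.
Proof.
elim: N F => [|N IH] F; first by rewrite expn0 big_ord1 !big_ord0.
rewrite big_ord_recl -(IH (fun i => F i.+1)) big_distrr /=.
rewrite -(big_mkord xpredT (fun k => \prod_(i < N.+1) F i (digit b k i))).
rewrite expnSr big_nat_mul /= big_mkord; apply: eq_bigr => q _.
rewrite -{1}[(q * b)%N]add0n big_addn mulSn addnK big_mkord big_distrl /=.
apply: eq_bigr => c _; rewrite big_ord_recl digit0 /=; congr (_ * _).
  by rewrite addnC modnMDl modn_small.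
apply: eq_bigr => i _; rewrite /bump /= add1n digitS.
by rewrite divnDMl // divn_small // add0n.
Qed.

End Digits.

Section AutosimilarExtension.

Variables (K : fieldType) (b : nat).
Hypothesis b_gt1 : (1 < b)%N.
Let b_gt0 : (0 < b)%N. Proof. exact: ltnW. Qed.

(* (s + t).+1 digit positions suffice, as s, t < b ^ (s + t).+1. *)
Definition autosim_ext (m : infmx K) : infmx K :=
  fun s t => \prod_(i < (s + t).+1) m (digit b s i) (digit b t i).

Variable m : infmx K.
Hypothesis m00 : m 0%N 0%N = 1.

Lemma prod_digits_widen s t N N' :
  (s < b ^ N)%N -> (t < b ^ N)%N -> (N <= N')%N ->
  \prod_(i < N') m (digit b s i) (digit b t i) =
  \prod_(i < N) m (digit b s i) (digit b t i).
Proof.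
move=> s_lt t_lt le_NN'.
rewrite [RHS](big_ord_widen N' (fun i => m (digit b s i) (digit b t i))) //.
rewrite [RHS]big_mkcond; apply: eq_bigr => i _; case: ltnP => // le_Ni.
have le_exp : (b ^ N <= b ^ i)%N by rewrite leq_pexp2l // ltnW.
by rewrite !digit_eq0 // (leq_trans _ le_exp).
Qed.

Lemma autosim_ext_prod s t N : (s < b ^ N)%N -> (t < b ^ N)%N ->
  autosim_ext m s t = \prod_(i < N) m (digit b s i) (digit b t i).
Proof.
move=> s_lt t_lt.
have [s_lt' t_lt'] : (s < b ^ (s + t).+1 /\ t < b ^ (s + t).+1)%N.
  by split; apply: ltn_exp_of_ltn; rewrite // ltnS ?leq_addr ?leq_addl.
rewrite /autosim_ext -(@prod_digits_widen s t _ (maxn (s + t).+1 N)) ?leq_maxl //.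
by rewrite (@prod_digits_widen s t N) ?leq_maxr.
Qed.

Lemma autosim_ext_small s t : (s < b)%N -> (t < b)%N -> autosim_ext m s t = m s t.
Proof.
move=> s_lt t_lt.
by rewrite (@autosim_ext_prod _ _ 1) ?expn1 // big_ord1 !digit0 !modn_small.
Qed.

Lemma autosimilar_ext : autosimilar b (autosim_ext m).
Proof.
split; first by rewrite autosim_ext_small // ltnW.
move=> s t N s_lt t_lt; rewrite (autosim_ext_prod s_lt t_lt).
by apply: eq_bigr => i _; rewrite autosim_ext_small ?digit_ltb.
Qed.

Lemma autosim_ext_eq0 s t i : (i < (s + t).+1)%N ->
  m (digit b s i) (digit b t i) = 0 -> autosim_ext m s t = 0.
Proof.
by move=> i_lt m_eq0; rewrite /autosim_ext (bigD1 (Ordinal i_lt)) //= m_eq0 mul0r.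
Qed.

Lemma autosim_ext_lt0 : (forall i j, (i < j)%N -> m i j = 0) ->
  forall s t, (s < t)%N -> autosim_ext m s t = 0.
Proof.
move=> m_lt0 s t lt_st.
have t_lt : (t < b ^ (s + t).+1)%N by apply: ltn_exp_of_ltn; rewrite // ltnS leq_addl.
have [i i_lt lt_digit] := digit_ltn_exists b_gt0 lt_st t_lt.
exact: autosim_ext_eq0 i_lt (m_lt0 _ _ lt_digit).
Qed.

Lemma autosim_ext_gt0 : (forall i j, (j < i)%N -> m i j = 0) ->
  forall s t, (t < s)%N -> autosim_ext m s t = 0.
Proof.
move=> m_gt0 s t lt_ts.
have s_lt : (s < b ^ (t + s).+1)%N by apply: ltn_exp_of_ltn; rewrite // ltnS leq_addl.
have [i i_lt lt_digit] := digit_ltn_exists b_gt0 lt_ts s_lt.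
by apply: autosim_ext_eq0 (m_gt0 _ _ lt_digit); rewrite addnC.
Qed.

End AutosimilarExtension.

Section AutosimilarTriangular.

Variables (K : fieldType) (b : nat).
Hypothesis b_gt1 : (1 < b)%N.
Let b_gt0 : (0 < b)%N. Proof. exact: ltnW. Qed.

Lemma unipotent_lower_ext (L : infmx K) :
  unipotent_lower L -> unipotent_lower (autosim_ext b L).
Proof.
case=> L1 L0; split; last exact: autosim_ext_lt0.
by move=> s; rewrite /autosim_ext big1.
Qed.

Lemma unipotent_upper_ext (U : infmx K) :
  unipotent_upper U -> unipotent_upper (autosim_ext b U).
Proof.
case=> U1 U0; split; last exact: autosim_ext_gt0.
by move=> s; rewrite /autosim_ext big1.
Qed.

Lemma infmx_diagonal_ext (D : infmx K) :
  infmx_diagonal D -> infmx_diagonal (autosim_ext b D).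
Proof.
move=> D0 s t /eqP; rewrite neq_ltn => /orP[lt_st|lt_ts].
  by apply: autosim_ext_lt0 lt_st => // i j /ltn_eqF/eqP; apply: D0.
by apply: autosim_ext_gt0 lt_ts => // i j /gtn_eqF/eqP; apply: D0.
Qed.

Lemma sum_autosim_ext_LDU (L D U : infmx K) s t N :
  L 0%N 0%N = 1 -> D 0%N 0%N = 1 -> U 0%N 0%N = 1 ->
  (s < b ^ N)%N -> (t < b ^ N)%N ->
  \sum_(k < b ^ N) autosim_ext b L s k * autosim_ext b D k k * autosim_ext b U k t =
  \prod_(i < N) \sum_(c < b) L (digit b s i) c * D c c * U c (digit b t i).
Proof.
move=> L00 D00 U00 s_lt t_lt.
pose F i c := L (digit b s i) c * D c c * U c (digit b t i).
rewrite -(sum_prod_digits b_gt0 N F); apply: eq_bigr => k _.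
have k_lt := ltn_ord k.
rewrite (autosim_ext_prod b_gt1 L00 s_lt k_lt) (autosim_ext_prod b_gt1 D00 k_lt k_lt).
by rewrite (autosim_ext_prod b_gt1 U00 k_lt t_lt) -!big_split.
Qed.

End AutosimilarTriangular.

Section BlockLDU.

Variable K : fieldType.
Implicit Types f L D U : infmx K.

Definition ldu_block n f L D U : Prop :=
  [/\ unipotent_lower L, infmx_diagonal D, unipotent_upper U &
      forall i j, (i < n)%N -> (j < n)%N -> f i j = \sum_(k < n) L i k * D k k * U k j].

Definition schur_compl f : infmx K :=
  fun i j => f i.+1 j.+1 - f i.+1 0%N * f 0%N j.+1 / f 0%N 0%N.

Definition border (a : K) (r c : nat -> K) (m : infmx K) : infmx K :=
  fun i j => match i, j with
             | 0, 0 => a | 0, j.+1 => r j | i.+1, 0 => c i | i.+1, j.+1 => m i j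
             end.

Lemma det_submx_schur f n : f 0%N 0%N != 0 ->
  \det (submx_n f n.+1) = f 0%N 0%N * \det (submx_n (schur_compl f) n).
Proof.
move=> f00_neq0; set a := f 0%N 0%N.
pose Lf : 'M[K]_(1 + n) := block_mx 1%:M 0 (\col_i (f i.+1 0%N / a)) 1%:M.
pose Uf : 'M[K]_(1 + n) :=
  block_mx a%:M (\row_j f 0%N j.+1) 0 (submx_n (schur_compl f) n).
pose F : 'M[K]_(1 + n) := submx_n f n.+1.
have -> : submx_n f n.+1 = Lf *m Uf.
  rewrite -/F mulmx_block !mul1mx !mul0mx !addr0 mul_mx_scalar.
  rewrite -[F]submxK; f_equal; apply/matrixP => i j; rewrite /F.
  - by rewrite !mxE !ord1.
  - by rewrite !mxE !ord1.
  - by rewrite !mxE ord1 /= mulrC divfK.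
  - by rewrite !mxE big_ord_recl big_ord0 !mxE /= addr0 mulrAC addrC subrK.
by rewrite det_mulmx (@det_lblock K 1 n) (@det_ublock K 1 n) !det1 !mul1r det_scalar1.
Qed.

Lemma unipotent_lower_border c L :
  unipotent_lower L -> unipotent_lower (border 1 (fun=> 0) c L).
Proof. by case=> L1 L0; split=> [[]|[|i] [|j] //= lt_ij]; last apply: L0. Qed.

Lemma unipotent_upper_border r U :
  unipotent_upper U -> unipotent_upper (border 1 r (fun=> 0) U).
Proof. by case=> U1 U0; split=> [[]|[|i] [|j] //= lt_ji]; last apply: U0. Qed.

Lemma infmx_diagonal_border a D :
  infmx_diagonal D -> infmx_diagonal (border a (fun=> 0) (fun=> 0) D).
Proof.
by move=> D0 [|i] [|j] //= neq_ij; apply: D0 => eq_ij; rewrite eq_ij in neq_ij.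
Qed.

Lemma ldu_block_border n f L D U :
  f 0%N 0%N != 0 -> ldu_block n (schur_compl f) L D U ->
  ldu_block n.+1 f (border 1 (fun=> 0) (fun i => f i.+1 0%N / f 0%N 0%N) L)
    (border (f 0%N 0%N) (fun=> 0) (fun=> 0) D)
    (border 1 (fun j => f 0%N j.+1 / f 0%N 0%N) (fun=> 0) U).
Proof.
move=> f00_neq0 [Ll Dd Uu fact]; split.
- exact: unipotent_lower_border.
- exact: infmx_diagonal_border.
- exact: unipotent_upper_border.
move=> [|i] [|j] i_lt j_lt; rewrite big_ord_recl /=.
- by rewrite big1 ?addr0 ?mulr1 ?mul1r // => k _; rewrite !mul0r.
- by rewrite big1 ?addr0 ?mul1r 1?mulrC ?divfK // => k _; rewrite !mul0r.
- by rewrite big1 ?addr0 ?mulr1 ?divfK // => k _; rewrite mulr0.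
- by rewrite -fact // /schur_compl divfK // mulrA addrC subrK.
Qed.

Lemma ldu_block_exists n f :
  (forall k, (0 < k <= n)%N -> \det (submx_n f k) != 0) ->
  exists L D U, ldu_block n f L D U.
Proof.
elim: n f => [|n IH] f minors.
  pose I : infmx K := fun i j => (i == j)%:R.
  exists I, (fun _ _ => 0), I; split=> //; rewrite /I.
  - by split=> [i|i j /ltn_eqF ->]; rewrite ?eqxx.
  - by split=> [i|i j /gtn_eqF ->]; rewrite ?eqxx.
have f00_neq0 : f 0%N 0%N != 0 by have := minors 1%N isT; rewrite det_mx11 mxE.
have [|L [D [U ldu]]] := IH (schur_compl f).
  move=> k /andP[k_gt0 le_kn].
  by have := minors k.+1 le_kn; rewrite det_submx_schur // mulf_eq0 negb_or => /andP[].
by do 3 eexists; apply: ldu_block_border ldu.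
Qed.

Lemma ldu_block_pivot0 n f L D U :
  (0 < n)%N -> ldu_block n f L D U -> D 0%N 0%N = f 0%N 0%N.
Proof.
move=> n_gt0 [[L1 L0] _ [U1 _] fact]; rewrite fact // (bigD1 (Ordinal n_gt0)) //=.
rewrite L1 U1 mul1r mulr1 big1 ?addr0 // => k k_neq0.
by rewrite L0 ?mul0r // lt0n; apply: contra k_neq0 => /eqP k0; apply/eqP/val_inj.
Qed.

End BlockLDU.

Section LDUentry.

Variables (K : fieldType) (L D U : infmx K).
Hypotheses (L_lt0 : forall i j, (i < j)%N -> L i j = 0) (D_diag : infmx_diagonal D)
  (U_gt0 : forall i j, (j < i)%N -> U i j = 0).

Lemma LDU_entry_sum s t n : (s < n)%N -> (t < n)%N ->
  LDU_entry L D U s t = \sum_(k < n) L s k * D k k * U k t.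
Proof.
move=> s_lt t_lt; rewrite /LDU_entry.
pose row k := \sum_(l < t.+1) L s k * D k l * U l t.
rewrite (sum_ord_widen0 (n' := n) (F := row)) //; last first.
  by move=> k /andP[lt_sk _]; rewrite /row big1 // => l _; rewrite L_lt0 // !mul0r.
apply: eq_bigr => k _; rewrite /row.
rewrite (sum_ord_widen0 (n' := n) (F := fun l => L s k * D k l * U l t)) //; last first.
  by move=> l /andP[lt_tl _]; rewrite U_gt0 // mulr0.
rewrite (bigD1 k) //= big1 ?addr0 // => l l_neq_k.
rewrite D_diag ?mulr0 ?mul0r // => /val_inj eq_kl.
by rewrite eq_kl eqxx in l_neq_k.
Qed.

End LDUentry.

Theorem theorem2p1 (K : fieldType) (b : nat) (M : infmx K) :
  (2 <= b)%N ->
  autosimilar b M ->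
  autosim_nondegenerate b M ->
  exists L D U : infmx K,
    [/\ autosimilar b L, autosimilar b D & autosimilar b U] /\
    [/\ unipotent_lower L, infmx_diagonal D & unipotent_upper U] /\
    (forall s t : nat, M s t = LDU_entry L D U s t).
Proof.
move=> b_gt1 [M00 M_prod] M_nondeg.
have b_gt0 : (0 < b)%N by apply: ltnW.
have minors k : (0 < k <= b)%N -> \det (submx_n M k) != 0.
  case: k => [|[|k]] // k_le; last exact: M_nondeg.
  by rewrite det_mx11 mxE M00 oner_neq0.
have [l [d [u ldu]]] := ldu_block_exists minors.
have d00 : d 0%N 0%N = 1 by rewrite (ldu_block_pivot0 b_gt0 ldu).
have [Ll Dd Uu fact] := ldu.
have l00 := proj1 Ll 0%N; have u00 := proj1 Uu 0%N.
exists (autosim_ext b l), (autosim_ext b d), (autosim_ext b u).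
split; first by split; apply: autosimilar_ext.
have Lext := unipotent_lower_ext b_gt1 Ll.
have Dext := infmx_diagonal_ext b_gt1 Dd.
have Uext := unipotent_upper_ext b_gt1 Uu.
split; first by split.
move=> s t; set N := (s + t).+1.
have s_lt : (s < b ^ N)%N by apply: ltn_exp_of_ltn; rewrite // ltnS leq_addr.
have t_lt : (t < b ^ N)%N by apply: ltn_exp_of_ltn; rewrite // ltnS leq_addl.
rewrite (LDU_entry_sum (proj2 Lext) Dext (proj2 Uext) s_lt t_lt).
rewrite sum_autosim_ext_LDU // (M_prod s t N s_lt t_lt).
by apply: eq_bigr => i _; rewrite fact ?(digit_ltb b_gt0).
Qed.
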